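(* Let $N_1\in\mathbb{N}$ and $N_2\in\mathbb{N}$ with $N_2\ge1$. Define $\mathbb{D}_1=[0:N_1-1]$, $\mathbb{D}_2=\{k(N_1+1): k\in[0:N_2-1]\}$, the nested array $\mathbb{D}_{\mathrm{NA}}=\mathbb{D}_1\cup(\mathbb{D}_2+N_1)$, and the symmetric array $\mathbb{S}(\mathbb{D}_{\mathrm{NA}},\ell)=\mathbb{D}_{\mathrm{NA}}\cup(\max\mathbb{D}_{\mathrm{NA}}-\mathbb{D}_{\mathrm{NA}}+\ell)$. Then, with $\ell=N_1$, $$\mathbb{S}(\mathbb{D}_{\mathrm{NA}},N_1)=\mathbb{D}_1\cup(\mathbb{D}_2+N_1)\cup(\mathbb{D}_1+(N_1+1)N_2)\triangleq\mathbb{D}_{\mathrm{CNA}}(N_1,N_2),$$ this set has exactly $2N_1+N_2$ elements, and its sum set is contiguous: $\mathbb{D}_{\mathrm{CNA}}+\mathbb{D}_{\mathrm{CNA}}=[0:2\max\mathbb{D}_{\mathrm{CNA}}]$, where $\max\mathbb{D}_{\mathrm{CNA}}=(N_1+1)N_2+N_1-1$. Moreover its difference set is also contiguous: $\mathbb{D}_{\mathrm{CNA}}-\mathbb{D}_{\mathrm{CNA}}=[-\max\mathbb{D}_{\mathrm{CNA}}:\max\mathbb{D}_{\mathrm{CNA}}]$.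
   Context: For finite sets $\mathbb{A},\mathbb{B}\subset\mathbb{Z}$ and $c\in\mathbb{Z}$: $\mathbb{A}+\mathbb{B}=\{a+b\}$, $\mathbb{A}-\mathbb{B}=\{a-b\}$, $c-\mathbb{A}=\{c-a\}$, $\mathbb{A}+c=\{a+c\}$; $[a:b]=\{c\in\mathbb{Z}: a\le c\le b\}$ (empty if $b<a$); $\mathbb{N}$ includes $0$. *)

From HB Require Import structures.
From mathcomp Require Import all_boot all_order all_algebra.
From mathcomp Require Import finmap.
Set Implicit Arguments. Unset Strict Implicit. Unset Printing Implicit Defensive.
Import Order.TTheory GRing.Theory Num.Theory.
Local Open Scope ring_scope.
Local Open Scope fset_scope.

(* [a:b] = {c in Z | a <= c <= b}, empty if b < a *)
Definition zrange (a b : int) : {fset int} :=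
  [fset (a + i%:Z)%R | i in iota 0 (if a <= b then (absz (b - a)).+1 else 0%N)].

Definition sumset (A B : {fset int}) : {fset int} := [fset (a + b)%R | a in A, b in B].
Definition diffset (A B : {fset int}) : {fset int} := [fset (a - b)%R | a in A, b in B].
Definition rsub (c : int) (A : {fset int}) : {fset int} := [fset (c - a)%R | a in A].
Definition shift (A : {fset int}) (c : int) : {fset int} := [fset (a + c)%R | a in A].

Definition fmax (A : {fset int}) : int :=
  \big[Num.max/head 0 (A : seq int)]_(x <- (A : seq int)) x.

Definition symarr (D : {fset int}) (l : int) : {fset int} :=
  D `|` shift (rsub (fmax D) D) l.

(** The set is [D = [0:n-1] ∪ {k(n+1)+n : k < m} ∪ [(n+1)m : (n+1)m+n-1]], with
    [M = (n+1)m+n-1] its maximum.  It is symmetric, [D = M - D], and it is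
    obtained from the nested array by adding exactly its mirror image, which
    gives the first claim.  It contains [[0:n]] and the points [k(n+1)+n], whose
    translates by [[0:n]] tile [[n:M]]; hence [D + D ⊇ [0:M]], and the symmetry
    [D + D = 2M - (D + D)] gives [D + D = [0:2M]].  Finally
    [x ∈ D - D <-> x + M ∈ D + (M - D) = D + D], so [D - D = [-M:M]]. *)
From HB Require Import structures.
From mathcomp Require Import all_boot all_order all_algebra.
From mathcomp Require Import finmap zify ring.
Import Order.TTheory GRing.Theory Num.Theory.
Local Open Scope ring_scope.
Local Open Scope fset_scope.

Lemma in_zrange a b x : (x \in zrange a b) = (a <= x <= b).
Proof.
apply/imfsetP/idP => /= [[i]|/andP[lo hi]].
  rewrite mem_iota add0n; case: ifP => [le_ab|//] /andP[_].
  by rewrite ltnS -lez_nat gez0_abs ?subr_ge0 // => ? ->; lia.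
exists (absz (x - a)); last by rewrite gez0_abs ?subr_ge0 //; lia.
by rewrite mem_iota add0n ifT ?ltnS -?lez_nat ?gez0_abs ?subr_ge0 //; lia.
Qed.

Lemma card_zrange a b :
  #|` zrange a b| = if a <= b then (absz (b - a)).+1 else 0%N.
Proof.
by rewrite card_imfset /= ?undup_id ?iota_uniq ?size_iota // => i j /addrI [].
Qed.

Lemma card_zrange0 (k : nat) : #|` zrange 0 (k%:Z - 1)| = k.
Proof. by rewrite card_zrange; case: k => //= k; lia. Qed.

Lemma in_shift A c x : (x \in shift A c) = (x - c \in A).
Proof.
apply/imfsetP/idP => /= [[a Aa ->]|Axc]; first by rewrite addrK.
by exists (x - c); rewrite ?subrK.
Qed.

Lemma card_shift A c : #|` shift A c| = #|` A|.
Proof.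
by rewrite card_imfset /= ?undup_id ?fset_uniq //; exact: addIr.
Qed.

Lemma in_rsub c A x : (x \in rsub c A) = (c - x \in A).
Proof.
apply/imfsetP/idP => /= [[a Aa ->]|Acx]; first by rewrite opprB addrC subrK.
by exists (c - x); rewrite // opprB addrC subrK.
Qed.

Lemma card_scale (A : {fset int}) (d : int) :
  d != 0 -> #|` [fset k * d | k in A]| = #|` A|.
Proof.
move=> d_neq0; rewrite card_imfset /= ?undup_id ?fset_uniq //.
by move=> x y /(mulIf d_neq0).
Qed.

Lemma card_fsetU_disjoint (K : choiceType) (A B : {fset K}) :
  [disjoint A & B] -> #|` A `|` B| = (#|` A| + #|` B|)%N.
Proof. by move=> /disjoint_fsetI0 AB0; rewrite cardfsU AB0 cardfs0 subn0. Qed.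

Lemma bigmax_head_eq (s : seq int) x :
  x \in s -> {in s, forall y, y <= x} -> \big[Num.max/head 0 s]_(y <- s) y = x.
Proof.
case: s => [//|a s] xs le_x /=.
have le_ax : a <= x by apply: le_x; rewrite mem_head.
apply/eqP; rewrite eq_le; apply/andP; split.
  elim: (a :: s) le_x {xs} => [|b t IHt] le_bt; first by rewrite big_nil.
  rewrite big_cons ge_max le_bt ?mem_head // IHt // => y ty.
  by apply: le_bt; rewrite inE ty orbT.
elim: (a :: s) xs {le_x} => [//|b t IHt]; rewrite inE big_cons le_max.
by case/orP => [/eqP ->|/IHt ->]; rewrite ?lexx ?orbT.
Qed.

Lemma fmax_eq A x : x \in A -> {in A, forall y, y <= x} -> fmax A = x.
Proof. exact: bigmax_head_eq. Qed.

Definition nested_array (n m : int) : {fset int} :=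
  zrange 0 (n - 1) `|` shift [fset k * (n + 1) | k in zrange 0 (m - 1)] n.

Definition cna (n m : int) : {fset int} :=
  nested_array n m `|` shift (zrange 0 (n - 1)) ((n + 1) * m).

Definition cna_max (n m : int) : int := (n + 1) * m + n - 1.

Local Close Scope fset_scope.

Section ConcatenatedNestedArray.

Variables n m : int.
Hypotheses (n_ge0 : 0 <= n) (m_ge1 : 1 <= m).

Local Notation M := (cna_max n m).

Definition nested_mem (x : int) : Prop :=
  0 <= x <= n - 1 \/ exists2 k : int, 0 <= k <= m - 1 & x = k * (n + 1) + n.

Definition cna_mem (x : int) : Prop :=
  nested_mem x \/ (n + 1) * m <= x <= M.

Lemma mem_nested_array x : x \in nested_array n m <-> nested_mem x.
Proof.
rewrite in_fsetU in_zrange in_shift; split.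
  case/orP => [|/imfsetP[k /=]]; first by left.
  by rewrite in_zrange => k_range /eqP; rewrite subr_eq => /eqP ->; right; exists k.
case=> [->//|[k k_range ->]]; apply/orP; right; apply/imfsetP.
by exists k; rewrite /= ?in_zrange ?addrK.
Qed.

Lemma mem_cna x : x \in cna n m <-> cna_mem x.
Proof.
rewrite in_fsetU in_shift in_zrange /cna_mem /cna_max; split.
  by case/orP => [/mem_nested_array|range]; [left | right; lia].
by case=> [/mem_nested_array ->|range] //; apply/orP; right; lia.
Qed.

Lemma nested_mem_bounds x : nested_mem x -> 0 <= x <= (n + 1) * m - 1.
Proof. by case=> [|[k k_range ->]]; nia. Qed.

Lemma nested_mem_top : nested_mem ((n + 1) * m - 1).
Proof. by right; exists (m - 1); [lia | ring]. Qed.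

Lemma fmax_nested_array : fmax (nested_array n m) = (n + 1) * m - 1.
Proof.
apply: fmax_eq; first exact/mem_nested_array/nested_mem_top.
by move=> y /mem_nested_array /nested_mem_bounds /andP[].
Qed.

Lemma cna_mem_bounds x : cna_mem x -> 0 <= x <= M.
Proof. by case=> [/nested_mem_bounds|]; rewrite /cna_max; lia. Qed.

Lemma cna_mem_reflect x : cna_mem x -> cna_mem (M - x).
Proof.
rewrite /cna_mem /cna_max; case=> [[range|[k k_range ->]]|range].
- by right; lia.
- by left; right; exists (m - 1 - k); [lia | ring].
- by left; left; lia.
Qed.

Lemma cna_memE x : cna_mem x <-> nested_mem x \/ nested_mem (M - x).
Proof.
split=> [[|range]|[|nMx]].
- by left.
- by right; left; rewrite /cna_max in range *; lia.
- by left.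
- by rewrite -(subKr M x); apply: cna_mem_reflect; left.
Qed.

Lemma cna_mem_low r : 0 <= r <= n -> cna_mem r.
Proof.
move=> range; have [r_eqn|r_ltn] := eqVneq r n.
  by left; right; exists 0; [lia | rewrite r_eqn mul0r add0r].
by left; left; lia.
Qed.

Lemma fmax_cna : fmax (cna n m) = M.
Proof.
have cna_M : cna_mem M by rewrite -[M]subr0; apply/cna_mem_reflect/cna_mem_low; lia.
apply: fmax_eq; first exact/mem_cna.
by move=> y /mem_cna /cna_mem_bounds /andP[].
Qed.

Lemma symarr_nested_array : symarr (nested_array n m) n = cna n m.
Proof.
apply/fsetP => x.
have reflE : (n + 1) * m - 1 - (x - n) = M - x by rewrite /cna_max; ring.
rewrite in_fsetU in_shift in_rsub fmax_nested_array reflE; apply/idP/idP.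
  by case/orP => /mem_nested_array nx; apply/mem_cna/cna_memE; [left | right].
by case/mem_cna/cna_memE => /mem_nested_array ->; rewrite ?orbT.
Qed.

Lemma cna_sum_low t : 0 <= t <= M ->
  exists a b, [/\ cna_mem a, cna_mem b & t = a + b].
Proof.
move=> t_range; have [t_ltn|t_gen] := ltP t n.
  by exists t, 0; split; rewrite ?addr0 //; apply: cna_mem_low; lia.
set q := ((t - n) %/ (n + 1))%Z; set r := ((t - n) %% (n + 1))%Z.
have tE : t = q * (n + 1) + r + n by rewrite -divz_eq subrK.
have r_ge0 : 0 <= r by apply: modz_ge0; lia.
have r_ltn : r < n + 1 by apply: ltz_pmod; lia.
exists (q * (n + 1) + n), r; split.
- by left; right; exists q => //; rewrite /cna_max in t_range; nia.
- by apply: cna_mem_low; lia.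
- by rewrite {1}tE addrAC.
Qed.

Lemma cna_sum t : 0 <= t <= 2 * M ->
  exists a b, [/\ cna_mem a, cna_mem b & t = a + b].
Proof.
move=> t_range; have [t_leM|t_gtM] := leP t M; first by apply: cna_sum_low; lia.
have [a [b [ca cb tE]]] : exists a b, [/\ cna_mem a, cna_mem b & 2 * M - t = a + b].
  by apply: cna_sum_low; lia.
exists (M - a), (M - b); split; try exact: cna_mem_reflect.
by move: tE; lia.
Qed.

Lemma sumset_cna : sumset (cna n m) (cna n m) = zrange 0 (2 * M).
Proof.
apply/fsetP => x; rewrite in_zrange; apply/imfset2P/idP => /=.
  case=> a /mem_cna /cna_mem_bounds a_range [b /mem_cna /cna_mem_bounds b_range ->].
  by lia.
move=> /cna_sum [a [b [ca cb ->]]].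
by exists a; [exact/mem_cna | exists b => //; exact/mem_cna].
Qed.

Lemma diffset_cna : diffset (cna n m) (cna n m) = zrange (- M) M.
Proof.
apply/fsetP => x; rewrite in_zrange; apply/imfset2P/idP => /=.
  case=> a /mem_cna /cna_mem_bounds a_range [b /mem_cna /cna_mem_bounds b_range ->].
  by lia.
move=> x_range; have [|a [b [ca cb sumE]]] := cna_sum (x + M); first by lia.
exists a; first exact/mem_cna.
exists (M - b); first exact/mem_cna/cna_mem_reflect.
by move: sumE; lia.
Qed.

End ConcatenatedNestedArray.

Local Open Scope fset_scope.

Lemma card_cna (N1 N2 : nat) : (1 <= N2)%N -> #|` cna N1 N2| = (2 * N1 + N2)%N.
Proof.
move=> N2_ge1.
have disj_low_mid : [disjoint zrange 0 (N1%:Z - 1) &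
    shift [fset k * (N1%:Z + 1) | k in zrange 0 (N2%:Z - 1)] N1].
  apply/fdisjointP => x; rewrite in_zrange in_shift => x_range.
  by apply/imfsetP => -[k /=]; rewrite in_zrange => k_range; nia.
have disj_nested_high : [disjoint nested_array N1 N2 &
    shift (zrange 0 (N1%:Z - 1)) ((N1%:Z + 1) * N2)].
  apply/fdisjointP => x /mem_nested_array; rewrite in_shift in_zrange.
  by case=> [|[k k_range ->]]; nia.
rewrite /cna card_fsetU_disjoint // /nested_array card_fsetU_disjoint //.
rewrite !card_shift card_scale; last by lia.
by rewrite !card_zrange0; lia.
Qed.

Theorem mainTheorem4 (N1 N2 : nat) (hN2 : (1 <= N2)%N) :
  let D1 : {fset int} := zrange 0 (N1%:Z - 1) in
  let D2 : {fset int} := [fset (k * (N1%:Z + 1))%R | k in zrange 0 (N2%:Z - 1)] in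
  let DNA : {fset int} := D1 `|` shift D2 N1%:Z in
  let DCNA : {fset int} :=
    D1 `|` shift D2 N1%:Z `|` shift D1 ((N1%:Z + 1) * N2%:Z) in
  let M : int := (N1%:Z + 1) * N2%:Z + N1%:Z - 1 in
  [/\ symarr DNA N1%:Z = DCNA,
      #|` DCNA| = (2 * N1 + N2)%N,
      fmax DCNA = M,
      sumset DCNA DCNA = zrange 0 (2 * fmax DCNA)
    & diffset DCNA DCNA = zrange (- fmax DCNA) (fmax DCNA)].
Proof.
move=> D1 D2 DNA DCNA M.
have n_ge0 : 0 <= N1%:Z by [].
have m_ge1 : 1 <= N2%:Z by rewrite lez_nat.
have fmaxE : fmax DCNA = M by apply: fmax_cna.
rewrite fmaxE; split => //.
- exact: symarr_nested_array.
- exact: card_cna.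
- exact: sumset_cna.
- exact: diffset_cna.
Qed.
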